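(* Let $L=\mathbb{Z}[d^{\pm 1}, n^{\pm 1}, s^{\pm 1}]$ be the Laurent polynomial ring in three variables, and let $X$ be any $L$-module. Define binary operations on $X$ by \[x\ast y=(-dsn^2)x+ny\quad\text{and}\quad x\cdot y=dx+sy .\] Then $(X,\ast,\cdot)$ is a biquasile. Such a biquasile is called an Alexander (or linear) biquasile.
   Context: A biquasile is a set $X$ with binary operations $\ast,\cdot,\backslash^{\ast},/^{\ast},\backslash,/ : X\times X\to X$ satisfying the following two groups of conditions. First, $\ast$ and $\cdot$ are quasigroup operations with the given left and right inverse operations: for all $x,y\in X$, \[y\backslash^{\ast}(y\ast x)=x=(x\ast y)/^{\ast}y,\qquad y\backslash(y\cdot x)=x=(x\cdot y)/y.\] Second, for all $a,b,x,y\in X$, \[a\ast(x\cdot [y\ast(a\cdot b)]) = (a\ast[x\cdot y])\ast(x\cdot [y\ast([a\ast(x\cdot y)]\cdot b)])\] and \[y\ast([a\ast (x\cdot y)]\cdot b) = (y\ast[a\cdot b])\ast([a\ast (x\cdot [y\ast(a\cdot b)])]\cdot b).\] The claim asserts that inverse operations $\backslash^{\ast},/^{\ast},\backslash,/$ exist making $X$ satisfy all of these conditions with the given $\ast$ and $\cdot$. *)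

From HB Require Import structures.
From mathcomp Require Import all_boot all_algebra.
Set Implicit Arguments. Unset Strict Implicit. Unset Printing Implicit Defensive.
Import GRing.Theory.
Local Open Scope ring_scope.

Definition biquasile (X : Type) (star dot : X -> X -> X) : Prop :=
  exists ldivs rdivs ldiv rdiv : X -> X -> X,
    (forall x y : X, ldivs y (star y x) = x /\ rdivs (star x y) y = x) /\
    (forall x y : X, ldiv y (dot y x) = x /\ rdiv (dot x y) y = x) /\
    (forall a b x y : X,
        star a (dot x (star y (dot a b)))
        = star (star a (dot x y))
               (dot x (star y (dot (star a (dot x y)) b)))) /\
    (forall a b x y : X,
        star y (dot (star a (dot x y)) b)
        = star (star y (dot a b))
               (dot (star a (dot x (star y (dot a b)))) b)).

Definition alex_star (R : comUnitRingType) (X : lmodType R) (d n s : R)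
  (x y : X) : X := (- (d * s * n ^+ 2)) *: x + n *: y.
Definition alex_dot (R : comUnitRingType) (X : lmodType R) (d n s : R)
  (x y : X) : X := d *: x + s *: y.

(* Both operations have the affine shape [p x + q y] with unit coefficients, so
   they are quasigroups whose divisions are obtained by solving a linear
   equation.  Each biquasile axiom is an equality between R-linear combinations
   of [a, b, x, y]; comparing the four coefficients reduces it to polynomial
   identities in [d, n, s]. *)

From HB Require Import structures.
From mathcomp Require Import all_boot all_algebra.
From mathcomp Require Import ring.
Set Implicit Arguments. Unset Strict Implicit. Unset Printing Implicit Defensive.
Import GRing.Theory.
Local Open Scope ring_scope.

Definition quasigroup (T : Type) (op : T -> T -> T) : Prop :=
  exists ldiv rdiv : T -> T -> T,
    forall x y : T, ldiv y (op y x) = x /\ rdiv (op x y) y = x.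

Section LinearOperation.
Variables (R : comUnitRingType) (X : lmodType R).

Definition linop (p q : R) (x y : X) : X := p *: x + q *: y.

Lemma linop_ldivK (p q : R) (x y : X) :
  q \is a GRing.unit -> q^-1 *: (linop p q y x - p *: y) = x.
Proof. by move=> Uq; rewrite /linop addrAC subrr add0r scalerA mulVr ?scale1r. Qed.

Lemma linop_rdivK (p q : R) (x y : X) :
  p \is a GRing.unit -> p^-1 *: (linop p q x y - q *: y) = x.
Proof. by move=> Up; rewrite /linop addrK scalerA mulVr ?scale1r. Qed.

Lemma linop_quasigroup (p q : R) :
  p \is a GRing.unit -> q \is a GRing.unit -> quasigroup (linop p q).
Proof.
move=> Up Uq.
exists (fun y z => q^-1 *: (z - p *: y)), (fun z y => p^-1 *: (z - q *: y)).
by move=> x y; rewrite linop_ldivK // linop_rdivK.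
Qed.

End LinearOperation.

Section Combinations.
Variables (R : comUnitRingType) (X : lmodType R) (a b x y : X).

Definition comb4 (ca cb cx cy : R) : X := ca *: a + cb *: b + cx *: x + cy *: y.

Lemma comb4D p1 p2 p3 p4 q1 q2 q3 q4 :
  comb4 p1 p2 p3 p4 + comb4 q1 q2 q3 q4
  = comb4 (p1 + q1) (p2 + q2) (p3 + q3) (p4 + q4).
Proof.
rewrite /comb4 !scalerDl addrACA; congr (_ + _); rewrite addrACA; congr (_ + _).
by rewrite addrACA.
Qed.

Lemma comb4Z c p1 p2 p3 p4 :
  c *: comb4 p1 p2 p3 p4 = comb4 (c * p1) (c * p2) (c * p3) (c * p4).
Proof. by rewrite /comb4 !scalerDr !scalerA. Qed.

Lemma comb4_a : a = comb4 1 0 0 0.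
Proof. by rewrite /comb4 !scale0r scale1r !addr0. Qed.

Lemma comb4_b : b = comb4 0 1 0 0.
Proof. by rewrite /comb4 !scale0r scale1r add0r !addr0. Qed.

Lemma comb4_x : x = comb4 0 0 1 0.
Proof. by rewrite /comb4 !scale0r scale1r addr0 !add0r. Qed.

Lemma comb4_y : y = comb4 0 0 0 1.
Proof. by rewrite /comb4 !scale0r scale1r !add0r. Qed.

Variables d n s : R.
Local Notation star := (alex_star d n s).
Local Notation dot := (alex_dot d n s).

Lemma alex_biquasile_axiom1 :
  star a (dot x (star y (dot a b)))
  = star (star a (dot x y)) (dot x (star y (dot (star a (dot x y)) b))).
Proof.
rewrite /alex_star /alex_dot comb4_a comb4_b comb4_x comb4_y !(comb4Z, comb4D).
by congr comb4; ring.
Qed.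

Lemma alex_biquasile_axiom2 :
  star y (dot (star a (dot x y)) b)
  = star (star y (dot a b)) (dot (star a (dot x (star y (dot a b)))) b).
Proof.
rewrite /alex_star /alex_dot comb4_a comb4_b comb4_x comb4_y !(comb4Z, comb4D).
by congr comb4; ring.
Qed.

End Combinations.

Theorem proposition4 (R : comUnitRingType) (d n s : R)
  (hd : d \is a GRing.unit) (hn : n \is a GRing.unit) (hs : s \is a GRing.unit)
  (X : lmodType R) :
  biquasile (alex_star d n s : X -> X -> X) (alex_dot d n s : X -> X -> X).
Proof.
have Ustar : - (d * s * n ^+ 2) \is a GRing.unit.
  by rewrite unitrN unitrM unitrX // unitrM hd hs.
have [ldivs [rdivs divsK]] := linop_quasigroup X Ustar hn.
have [ldiv [rdiv divK]] := linop_quasigroup X hd hs.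
exists ldivs, rdivs, ldiv, rdiv; split; [exact: divsK | split; [exact: divK |]].
split=> a b x y; [exact: alex_biquasile_axiom1 | exact: alex_biquasile_axiom2].
Qed.
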